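(* Fix a round $t$. Let $x_{ti} \in \mathbb{R}^d$ and revenues $r_{ti}$ with $|r_{ti}| \le 1$. Let $\theta^* \in \mathbb{R}^d$, $\alpha_t > 0$, and let $V_t$ be positive definite. Let $z_{ti}$ be real numbers, and let $S_t$ be the chosen assortment. Suppose that for all $i \in S_t$, $$0 \le z_{ti} - x_{ti}^\top\theta^* \le 2\alpha_t\|x_{ti}\|_{V_t^{-1}}.$$ Then $$\tilde R_t(S_t) - R_t(S_t,\theta^* ) \le 2\alpha_t\max_{i\in S_t}\|x_{ti}\|_{V_t^{-1}}.$$
   Context: For an assortment $S$, the MNL expected revenue is $$R_t(S,\theta) = \frac{\sum_{i\in S}r_{ti}\exp(x_{ti}^\top\theta)}{1+\sum_{j\in S}\exp(x_{tj}^\top\theta)},$$ and the optimistic revenue is $$\tilde R_t(S) = \frac{\sum_{i\in S}r_{ti}\exp(z_{ti})}{1+\sum_{j\in S}\exp(z_{tj})}.$$ Also $\|x\|_{V^{-1}} = \sqrt{x^\top V^{-1}x}$. *)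

From HB Require Import structures.
From mathcomp Require Import all_boot all_order all_algebra.
From mathcomp Require Import all_classical all_reals all_analysis.
Set Implicit Arguments. Unset Strict Implicit. Unset Printing Implicit Defensive.
Import Order.TTheory GRing.Theory Num.Theory.
Local Open Scope ring_scope.

Definition dotv (R : realType) (d : nat) (x y : 'cV[R]_d) : R := (x^T *m y) 0 0.

Definition posdef (R : realType) (d : nat) (V : 'M[R]_d) : Prop :=
  V^T = V /\ forall u : 'cV[R]_d, u != 0 -> 0 < (u^T *m V *m u) 0 0.

Definition wnorm (R : realType) (d : nat) (V : 'M[R]_d) (x : 'cV[R]_d) : R :=
  Num.sqrt ((x^T *m invmx V *m x) 0 0).

Definition mnl_rev (R : realType) (n d : nat) (r : 'I_n -> R)
  (x : 'I_n -> 'cV[R]_d) (S : {set 'I_n}) (theta : 'cV[R]_d) : R :=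
  (\sum_(i in S) r i * expR (dotv (x i) theta)) /
  (1 + \sum_(j in S) expR (dotv (x j) theta)).

Definition opt_rev (R : realType) (n : nat) (r : 'I_n -> R) (z : 'I_n -> R)
  (S : {set 'I_n}) : R :=
  (\sum_(i in S) r i * expR (z i)) / (1 + \sum_(j in S) expR (z j)).

(* Move the utilities along the segment from u_i = x_i^T theta to z_i.  With
   choice probabilities p_i and gaps d_i = z_i - u_i in [0, M], where
   M = 2 alpha max_i ||x_i||_{V^-1}, the derivative of the MNL revenue f is
   sum_i d_i p_i (r_i - f).  As the revenues lie in [-1, 1], the mass
   sum_i p_i (r_i - f)^+ of the positive deviations from f is at most 1, so the
   derivative is at most M and the mean value theorem gives the bound. *)

From HB Require Import structures.
From mathcomp Require Import all_boot all_order all_algebra.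
From mathcomp Require Import all_classical all_reals all_analysis.
From mathcomp Require Import ring lra.
Import Order.TTheory GRing.Theory Num.Theory.
Local Open Scope ring_scope.

Section MNLRevenue.
Variables (R : realFieldType) (n : nat) (S : {set 'I_n}) (r : 'I_n -> R).

(* [w i] plays the role of the attraction weight exp(x_i^T theta). *)
Definition mnl_revenue (w : 'I_n -> R) : R :=
  (\sum_(i in S) r i * w i) / (1 + \sum_(j in S) w j).

Variable w : 'I_n -> R.
Hypothesis w_ge0 : forall i, 0 <= w i.

Lemma mnl_denom_gt0 : 0 < 1 + \sum_(j in S) w j.
Proof. by rewrite ltr_pwDl // sumr_ge0. Qed.

Lemma sum_mnl_dev : \sum_(i in S) w i * (r i - mnl_revenue w) = mnl_revenue w.
Proof.
set f := mnl_revenue w.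
have num : \sum_(i in S) r i * w i = f * (1 + \sum_(j in S) w j).
  by rewrite divfK // gt_eqF // mnl_denom_gt0.
rewrite (eq_bigr (fun i => r i * w i - f * w i)) => [|i _]; last by ring.
by rewrite sumrB num -mulr_sumr; ring.
Qed.

Hypothesis r_bound : forall i, `|r i| <= 1.

Lemma sum_mnl_posdev_le :
  \sum_(i in S) w i * Num.max (r i - mnl_revenue w) 0 <= 1 + \sum_(j in S) w j.
Proof.
set f := mnl_revenue w.
have r_itv i : -1 <= r i <= 1 by rewrite -ler_norml.
have le_sum_w (g : 'I_n -> R) : (forall i, 0 <= g i <= 1) ->
    \sum_(i in S) w i * g i <= \sum_(j in S) w j.
  move=> g01; apply: ler_sum => i _; rewrite -[leRHS]mulr1.
  by apply: ler_wpM2l => //; case/andP: (g01 i).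
have [f_ge0 | f_lt0] := lerP 0 f.
  apply: le_trans (le_sum_w _ _) _; last lra.
  by move=> i; have := r_itv i; case: (lerP 0 (r i - f)) => h; lra.
(* For f < 0 write the positive part as deviation plus negative part: the
   deviations sum to f < 0 and each negative part is at most f + 1 <= 1. *)
rewrite (eq_bigr (fun i => w i * (r i - f) + w i * Num.max (f - r i) 0)) => [|i _]; last first.
  by rewrite -mulrDr; congr (_ * _); case: (lerP 0 (r i - f)); case: (lerP 0 (f - r i)); lra.
rewrite big_split /= sum_mnl_dev -/f.
suff : \sum_(i in S) w i * Num.max (f - r i) 0 <= \sum_(j in S) w j by lra.
by apply: le_sum_w => i; have := r_itv i; case: (lerP 0 (f - r i)) => h; lra.
Qed.

Lemma sum_mnl_scaled_dev_le (dl : 'I_n -> R) (M : R) :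
  0 <= M -> (forall i, i \in S -> 0 <= dl i <= M) ->
  \sum_(i in S) dl i * w i * (r i - mnl_revenue w) <= M * (1 + \sum_(j in S) w j).
Proof.
move=> M_ge0 dl_itv; set f := mnl_revenue w.
apply: le_trans (ler_wpM2l M_ge0 sum_mnl_posdev_le); rewrite mulr_sumr.
apply: ler_sum => i iS; have /andP[dl_ge0 dl_leM] := dl_itv i iS.
rewrite -mulrA; have [dev_ge0 | dev_lt0] := lerP 0 (r i - f).
  by rewrite ler_wpM2r // mulr_ge0.
rewrite mulr0 mulr0; apply: mulr_ge0_le0 => //; apply: mulr_ge0_le0 => //; exact: ltW.
Qed.

End MNLRevenue.

Arguments mnl_revenue {R n} S r w.

Lemma is_derive_sum_in (R : numFieldType) (V W : normedModType R) (n : nat)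
    (S : {set 'I_n}) (h : 'I_n -> V -> W) (dh : 'I_n -> W) (x v : V) :
  (forall i, i \in S -> is_derive x v (h i) (dh i)) ->
  is_derive x v (fun y => \sum_(i in S) h i y) (\sum_(i in S) dh i).
Proof.
move=> hd; rewrite big_mkcond.
have -> : (fun y => \sum_(i in S) h i y) =
    \sum_(i < n) (fun y => if i \in S then h i y else 0).
  by apply/funext => y; rewrite fct_sumE big_mkcond.
by apply: is_derive_sum => i; case: ifP => [/hd //|_]; exact: is_derive_cst.
Qed.

Section MNLRevenueAlongLine.
Variables (R : realType) (n : nat) (S : {set 'I_n}).

Lemma is_derive_expR_line (a b s : R) :
  is_derive s 1 (fun t => expR (a + t * b)) (b * expR (a + s * b)).
Proof.
have line : is_derive s 1 (fun t => a + t * b) b.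
  apply: is_derive_eq (is_deriveD (is_derive_cst a s 1)
    (is_deriveM (is_derive_id s 1) (is_derive_cst b s 1))) _.
  by rewrite /= add0r scaler0 add0r scaler1.
exact: is_derive_eq (is_derive1_comp (is_derive_expR _) line) (mulrC _ _).
Qed.

Definition expR_line (u dl : 'I_n -> R) (t : R) (i : 'I_n) : R := expR (u i + t * dl i).

Lemma is_derive_mnl_revenue_line (r u dl : 'I_n -> R) (s : R) :
  is_derive s 1 (fun t => mnl_revenue S r (expR_line u dl t))
    ((\sum_(i in S) dl i * expR_line u dl s i * (r i - mnl_revenue S r (expR_line u dl s)))
     / (1 + \sum_(j in S) expR_line u dl s j)).
Proof.
set w := expR_line u dl.
have dN : is_derive s 1 (fun t => \sum_(i in S) r i * w t i)
                       (\sum_(i in S) r i * (dl i * w s i)).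
  by apply: is_derive_sum_in => i _; exact: is_deriveZ (is_derive_expR_line _ _ _).
have dD : is_derive s 1 (fun t => 1 + \sum_(i in S) w t i) (\sum_(i in S) dl i * w s i).
  have dsum : is_derive s 1 (fun t => \sum_(i in S) w t i) (\sum_(i in S) dl i * w s i).
    by apply: is_derive_sum_in => i _; exact: is_derive_expR_line.
  exact: is_derive_eq (is_deriveD (is_derive_cst (1 : R) s 1) dsum) (add0r _).
have D_neq0 : 1 + \sum_(i in S) w s i != 0.
  by rewrite gt_eqF // mnl_denom_gt0 // => i; exact/ltW/expR_gt0.
rewrite /mnl_revenue.
have dDV := is_deriveV (f := fun t => 1 + \sum_(i in S) w t i) D_neq0 dD.
apply: is_derive_eq (is_deriveM dN dDV) _.
set N := \sum_(i in S) r i * w s i; set D := 1 + _ in D_neq0 *.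
have -> : \sum_(i in S) dl i * w s i * (r i - N / D) =
    \sum_(i in S) r i * (dl i * w s i) - N / D * \sum_(i in S) dl i * w s i.
  by rewrite mulr_sumr -sumrB; apply: eq_bigr => i _; ring.
by rewrite /GRing.scale /=; field.
Qed.

Lemma mnl_revenue_expR_sub_le (r u v : 'I_n -> R) (M : R) :
  0 <= M -> (forall i, `|r i| <= 1) -> (forall i, i \in S -> 0 <= v i - u i <= M) ->
  mnl_revenue S r (fun i => expR (v i)) - mnl_revenue S r (fun i => expR (u i)) <= M.
Proof.
move=> M_ge0 r_bound gap_itv; set dl := fun i => v i - u i.
have line1 : expR_line u dl 1 = fun i => expR (v i).
  by apply/funext => i; rewrite /expR_line mul1r addrC subrK.
have line0 : expR_line u dl 0 = fun i => expR (u i).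
  by apply/funext => i; rewrite /expR_line mul0r addr0.
rewrite -line1 -line0.
have gD t := is_derive_mnl_revenue_line r u dl t.
have [|c _ ->] := MVT_segment ler01 (fun t _ => gD t).
  by apply: derivable_within_continuous => t _; exact: ex_derive.
have w_ge0 i : 0 <= expR_line u dl c i by exact/ltW/expR_gt0.
rewrite subr0 mulr1 ler_pdivrMr ?mnl_denom_gt0 //.
exact: sum_mnl_scaled_dev_le.
Qed.
End MNLRevenueAlongLine.

Theorem lemma5 (R : realType) (n d : nat) (x : 'I_n -> 'cV[R]_d) (r : 'I_n -> R)
  (theta : 'cV[R]_d) (alpha : R) (V : 'M[R]_d) (z : 'I_n -> R) (S : {set 'I_n}) :
  (forall i, `|r i| <= 1) ->
  0 < alpha ->
  posdef V ->
  (forall i, i \in S ->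
     0 <= z i - dotv (x i) theta /\
     z i - dotv (x i) theta <= 2 * alpha * wnorm V (x i)) ->
  opt_rev r z S - mnl_rev r x S theta <=
    2 * alpha * \big[Num.max/0]_(i in S) wnorm V (x i).
Proof.
move=> r_bound alpha_gt0 _ z_gap.
set m := \big[Num.max/0]_(i in S) wnorm V (x i).
have m_ge0 : 0 <= m by exact: bigmax_ge_id.
have M_ge0 : 0 <= 2 * alpha * m by rewrite !mulr_ge0 // ltW.
have gap_itv i : i \in S -> 0 <= z i - dotv (x i) theta <= 2 * alpha * m.
  move=> iS; have [gap_ge0 gap_le] := z_gap i iS; rewrite gap_ge0 (le_trans gap_le) //.
  apply: ler_wpM2l; first by rewrite mulr_ge0 // ltW.
  exact: le_bigmax_cond iS.
exact: (@mnl_revenue_expR_sub_le R n S r (fun i => dotv (x i) theta) z _ M_ge0 r_bound gap_itv).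
Qed.
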